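(* Let $a,b,u,v$ be integers with $b>a\ge2$ and $u,v\ge2$, and set $X:=ab-a-b$. Consider the properties: (1) $a$, $b$ and $uv-1$ are pairwise coprime; (2) $\frac{1}{a}+\frac{1}{b}+\frac{v}{uv-1}>1$; (3) $vab-1=(uv-1)X$; (4) $a+b+u+v=4+(v-1)\bigl[ab-(u-1)X\bigr]$. If $a,b,u,v$ satisfy (1)–(4), then the triple $(a,b,uv-1)$ is one of $(5,7,3)$, $(4,11,3)$, $(2,7,11)$. If $a,b,u,v$ satisfy (1)–(3), then the triple $(a,b,uv-1)$ is one of $(5,7,3)$, $(4,11,3)$, $(2,7,11)$, $(3,14,5)$, $(3,10,7)$, $(4,5,9)$, $(3,8,11)$, $(3,7,19)$, $(2,9,5)$, or $(2,3,6v-1)$ (with $u=6$). *)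

From mathcomp Require Import all_boot all_order all_algebra.
Set Implicit Arguments. Unset Strict Implicit. Unset Printing Implicit Defensive.
Import Order.TTheory GRing.Theory Num.Theory.
Local Open Scope ring_scope.

Definition Xab (a b : int) : int := a * b - a - b.

Definition prop1 (a b u v : int) : Prop :=
  [/\ coprimez a b, coprimez a (u * v - 1) & coprimez b (u * v - 1)].

Definition prop2 (a b u v : int) : Prop :=
  1 < (a%:~R : rat)^-1 + (b%:~R : rat)^-1 + (v%:~R : rat) / ((u * v - 1)%:~R : rat).

Definition prop3 (a b u v : int) : Prop :=
  v * a * b - 1 = (u * v - 1) * Xab a b.

Definition prop4 (a b u v : int) : Prop :=
  a + b + u + v = 4 + (v - 1) * (a * b - (u - 1) * Xab a b).

From mathcomp Require Import all_boot all_order all_algebra.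
From mathcomp Require Import zify ring.
Set Implicit Arguments. Unset Strict Implicit. Unset Printing Implicit Defensive.
Import Order.TTheory GRing.Theory Num.Theory.
Local Open Scope ring_scope.

(* Put X = ab - a - b and k = uX - ab. Condition (3) reads X - 1 = v k, so
   k >= 0. If k = 0 then X = 1, i.e. (a - 1)(b - 1) = 2, which forces
   (a, b, u) = (2, 3, 6). Otherwise 2k <= vk = X - 1, and together with
   (u - 1) X = a + b + k this gives (2u - 3) X + 1 <= 2(a + b), hence u <= 4,
   a <= 5 and b <= 11, except when a = 3, u = 2 (a = 2, u = 2 gives k < 0);
   there (v - 2)(b - 6) = 8, so b <= 14. In this box v = (X - 1) / k is
   determined by (a, b, u), and a finite computation lists all solutions of
   (1) and (3); condition (4) keeps three of them. *)

Definition excess (a b u : int) : int := u * Xab a b - a * b.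

Lemma XabE (a b : int) : Xab a b + 1 = (a - 1) * (b - 1).
Proof. by rewrite /Xab; ring. Qed.

Lemma Xab_excess (a b u : int) : (u - 1) * Xab a b = a + b + excess a b u.
Proof. by rewrite /excess /Xab; ring. Qed.

Lemma Xab_gt0 (a b : int) : 2 <= a -> a < b -> 0 < Xab a b.
Proof. by move=> a2 ab; have := XabE a b; nia. Qed.

Lemma prop3_excess (a b u v : int) :
  prop3 a b u v -> Xab a b - 1 = v * excess a b u.
Proof. by rewrite /prop3 /excess; lia. Qed.

Lemma prop3_excess_ge0 (a b u v : int) : 2 <= a -> a < b -> 0 < v ->
  prop3 a b u v -> 0 <= excess a b u.
Proof.
move=> a2 ab v_gt0 /prop3_excess E; have := Xab_gt0 a2 ab.
by rewrite -(pmulr_rge0 _ v_gt0) -E; lia.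
Qed.

Lemma prop3_excess0 (a b u v : int) : 2 <= a -> a < b ->
  prop3 a b u v -> excess a b u = 0 -> [/\ a = 2, b = 3 & u = 6].
Proof.
move=> a2 ab /prop3_excess + k0; rewrite k0 mulr0 => /eqP.
rewrite subr_eq0 => /eqP X1.
have := XabE a b; have := Xab_excess a b u; rewrite X1 k0 addr0 mulr1.
have [a_2 | a3] : a = 2 \/ 3 <= a by lia.
  by subst a => Hu Hb; split; lia.
by nia.
Qed.

Lemma prop3_excess_le (a b u v : int) : 2 <= v -> 0 < excess a b u ->
  prop3 a b u v -> 2 * excess a b u <= Xab a b - 1.
Proof. by move=> v2 k_gt0 /prop3_excess ->; rewrite ler_pM2r. Qed.

Lemma prop3_Xab_le (a b u v : int) : 2 <= v -> 0 < excess a b u ->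
  prop3 a b u v -> (2 * u - 3) * Xab a b + 1 <= 2 * (a + b).
Proof.
move=> v2 k_gt0 E; have := prop3_excess_le v2 k_gt0 E; have := Xab_excess a b u.
by lia.
Qed.

Lemma prop3_excess_gt0_bounds (a b u v : int) :
  2 <= a -> a < b -> 2 <= u -> 2 <= v ->
  prop3 a b u v -> 0 < excess a b u -> [/\ a <= 5, b <= 14 & u <= 4].
Proof.
move=> a2 ab u2 v2 E k_gt0.
have key := prop3_Xab_le v2 k_gt0 E.
have X3 : 3 <= Xab a b by have := prop3_excess_le v2 k_gt0 E; lia.
move: key X3 k_gt0 (prop3_excess E); rewrite /excess /Xab => key X3 k_gt0 Ev.
have u4 : u <= 4 by nia.
have a5 : a <= 5 by nia.
split=> //.
have [a_2 | [a_3 | a4]] : a = 2 \/ a = 3 \/ 4 <= a by lia.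
- subst a; have [u_2 | u3] : u = 2 \/ 3 <= u by lia.
    by subst u; lia.
  by nia.
- subst a; have [u_2 | u3] : u = 2 \/ 3 <= u by lia.
    subst u; have [v_2 | v3] : v = 2 \/ 3 <= v by lia.
      by subst v; lia.
    by nia.
  by nia.
- by nia.
Qed.

Definition admissible (a b u v : int) : bool :=
  [&& 2 <= a, a < b, 2 <= u, 2 <= v,
      coprimez a b, coprimez a (u * v - 1), coprimez b (u * v - 1)
    & v * a * b - 1 == (u * v - 1) * Xab a b].

Lemma prop13_admissible (a b u v : int) : 2 <= a -> a < b -> 2 <= u -> 2 <= v ->
  prop1 a b u v -> prop3 a b u v -> admissible a b u v.
Proof. by rewrite /admissible => -> -> -> -> [-> -> ->] /eqP ->. Qed.

Definition small_solutions : seq (int * int * int * int) :=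
  [:: (5, 7, 2, 2); (4, 11, 2, 2); (2, 7, 3, 4); (3, 14, 2, 3); (3, 10, 2, 4);
      (4, 5, 2, 5); (3, 8, 2, 6); (3, 7, 2, 10); (2, 9, 3, 2)].

Definition int_iota (m n : nat) : seq int := [seq i%:Z | i <- iota m n].

Lemma mem_int_iota (x : int) (m n : nat) :
  m%:Z <= x < (m + n)%:Z -> x \in int_iota m n.
Proof.
case: x => [i | i] /andP[lo hi]; last by move: lo; lia.
by apply: map_f; rewrite mem_iota; lia.
Qed.

Lemma admissible_small_box :
  all (fun a => all (fun b => all (fun u =>
    admissible a b u ((Xab a b - 1) %/ excess a b u)%Z ==>
      ((a, b, u, (Xab a b - 1) %/ excess a b u)%Z \in small_solutions))
    (int_iota 2 3)) (int_iota 3 12)) (int_iota 2 4).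
Proof. by vm_compute. Qed.

Lemma prop13_classification (a b u v : int) :
  2 <= a -> a < b -> 2 <= u -> 2 <= v -> prop1 a b u v -> prop3 a b u v ->
  (a, b, u, v) \in small_solutions \/ [/\ a = 2, b = 3 & u = 6].
Proof.
move=> a2 ab u2 v2 H1 H3.
have : 0 <= excess a b u by apply: prop3_excess_ge0 H3; lia.
rewrite le0r => /orP[/eqP k0 | k_gt0]; first by right; apply: prop3_excess0 H3 k0.
left; have [a5 b14 u4] := prop3_excess_gt0_bounds a2 ab u2 v2 H3 k_gt0.
have v_eq : v = ((Xab a b - 1) %/ excess a b u)%Z.
  by rewrite (prop3_excess H3) mulzK // gt_eqF.
have a_box : a \in int_iota 2 4 by apply: mem_int_iota; lia.
have b_box : b \in int_iota 3 12 by apply: mem_int_iota; lia.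
have u_box : u \in int_iota 2 3 by apply: mem_int_iota; lia.
move/allP/(_ a a_box)/allP/(_ b b_box)/allP/(_ u u_box): admissible_small_box.
by rewrite -v_eq prop13_admissible.
Qed.

Theorem proposition3p3 (a b u v : int) :
  2 <= a -> a < b -> 2 <= u -> 2 <= v ->
  (prop1 a b u v -> prop2 a b u v -> prop3 a b u v -> prop4 a b u v ->
     (a, b, u * v - 1) = (5, 7, 3)
  \/ (a, b, u * v - 1) = (4, 11, 3)
  \/ (a, b, u * v - 1) = (2, 7, 11))
  /\
  (prop1 a b u v -> prop2 a b u v -> prop3 a b u v ->
     (a, b, u * v - 1) = (5, 7, 3)
  \/ (a, b, u * v - 1) = (4, 11, 3)
  \/ (a, b, u * v - 1) = (2, 7, 11)
  \/ (a, b, u * v - 1) = (3, 14, 5)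
  \/ (a, b, u * v - 1) = (3, 10, 7)
  \/ (a, b, u * v - 1) = (4, 5, 9)
  \/ (a, b, u * v - 1) = (3, 8, 11)
  \/ (a, b, u * v - 1) = (3, 7, 19)
  \/ (a, b, u * v - 1) = (2, 9, 5)
  \/ ((a, b, u * v - 1) = (2, 3, 6 * v - 1) /\ u = 6)).
Proof.
move=> a2 ab u2 v2.
split=> [H1 _ H3 H4 | H1 _ H3];
  have [|[? ? ?]] := prop13_classification a2 ab u2 v2 H1 H3; subst;
  rewrite ?inE; do ?case/orP=> [/eqP[? ? ? ?]|]; try move/eqP=> [? ? ? ?]; subst.
all: first [by do ?[by left | right] | by move: H4; rewrite /prop4 /Xab; lia].
Qed.
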